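(* Let $\mathcal H$ be a real Hilbert space and $1\le p<2$. Let $J:\mathcal H\to\mathbb R\cup\{\infty\}$ be convex, lower semicontinuous, proper, with dense effective domain, and absolutely $p$-homogeneous ($J(cu)=|c|^pJ(u)$ for all $c\neq0$, $u\in\mathcal H$, and $J(0)=0$), and assume $\lambda_1:=\inf_{u\in\mathcal H_0}\frac{pJ(u)}{\|u\|^p}>0$. Let $f\in\mathcal H_0$ and let $u$ solve the gradient flow $\partial_t u+\partial J(u)\ni 0$, $u(0)=f$. Then the extinction time satisfies $$T_{\mathrm{ex}}\le \frac{\|f\|^{2-p}}{(2-p)\lambda_1}<\infty.$$
   Context: $\langle\cdot,\cdot\rangle$ and $\|\cdot\|$ denote the inner product and norm of $\mathcal H$. The subdifferential is $\partial J(u)=\{\zeta\in\mathcal H: J(u)+\langle\zeta,v-u\rangle\le J(v)\ \forall v\in\mathcal H\}$. $\mathcal N(J)=\{u:J(u)=0\}$ and $\mathcal H_0:=\mathcal N(J)^\perp\setminus\{0\}$. The gradient flow is understood in Brezis' sense: the unique continuous $u:[0,\infty)\to\mathcal H$, Lipschitz on $[\delta,\infty)$ for every $\delta>0$, right-differentiable on $(0,\infty)$, with $u(0)=f$ and $\partial_t^+u(t)=-\zeta(t)$, where $\zeta(t)$ is the minimal-norm element of $\partial J(u(t))$. The extinction time is $T_{\mathrm{ex}}:=\inf\{T>0: u(t)=0\ \forall t\ge T\}\in(0,\infty]$. *)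

From HB Require Import structures.
From mathcomp Require Import all_boot all_order all_algebra.
From mathcomp Require Import all_classical all_reals all_analysis.
Set Implicit Arguments. Unset Strict Implicit. Unset Printing Implicit Defensive.
Import Order.TTheory GRing.Theory Num.Theory.
Import numFieldNormedType.Exports.
Local Open Scope classical_set_scope.
Local Open Scope ring_scope.

(* A real Hilbert space: a complete normed space V over R whose norm comes
   from the (real) inner product ip. *)
Definition is_inner_product (R : realType) (V : normedModType R)
    (ip : V -> V -> R) : Prop :=
  [/\ (forall x y, ip x y = ip y x),
      (forall x y z, ip (x + y) z = ip x z + ip y z),
      (forall (a : R) x y, ip (a *: x) y = a * ip x y) &
      (forall x, ip x x = `|x| ^+ 2)].

Section Defs.
Context {R : realType} {V : normedModType R}.
Local Open Scope ereal_scope.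

Definition convex_fun (J : V -> \bar R) : Prop :=
  forall x y : V, forall t : R, (0 <= t <= 1)%R ->
    J (t *: x + (1 - t) *: y)%R <= t%:E * J x + (1 - t)%:E * J y.

Definition proper_fun (J : V -> \bar R) : Prop :=
  (forall x, J x != -oo) /\ exists x, J x < +oo.

Definition dom (J : V -> \bar R) : set V := [set x | J x < +oo].

Definition abs_homogeneous (p : R) (J : V -> \bar R) : Prop :=
  (forall (c : R) x, c != 0%R -> J (c *: x)%R = (`|c| `^ p)%:E * J x) /\ J 0%R = 0.

Definition nullJ (J : V -> \bar R) : set V := [set u | J u = 0].

Definition orth (ip : V -> V -> R) (A : set V) : set V :=
  [set v | forall w, A w -> ip v w = 0%R].

Definition H0 (ip : V -> V -> R) (J : V -> \bar R) : set V :=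
  orth ip (nullJ J) `\ 0%R.

Definition lambda1 (ip : V -> V -> R) (p : R) (J : V -> \bar R) : \bar R :=
  ereal_inf [set (p%:E * J u) * ((`|u| `^ p)^-1)%R%:E | u in H0 ip J].

Definition subdiff (ip : V -> V -> R) (J : V -> \bar R) (u : V) : set V :=
  [set z | forall v, J u + (ip z (v - u)%R)%:E <= J v].

Definition min_norm_subgrad (ip : V -> V -> R) (J : V -> \bar R) (u z : V) : Prop :=
  subdiff ip J u z /\ (forall w, subdiff ip J u w -> (`|z| <= `|w|)%R).

(* Brezis solution of the gradient flow  u' + dJ(u) ∋ 0, u(0) = f
   (only the values of u on [0, +oo) matter). *)
Definition brezis_flow (ip : V -> V -> R) (J : V -> \bar R) (f : V)
    (u : R -> V) : Prop :=
  [/\ u 0%R = f,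
      {within `[0%R, +oo[, continuous u},
      (forall delta : R, (0 < delta)%R -> exists L : R,
          forall s t : R, (delta <= s)%R -> (delta <= t)%R ->
            (`|u s - u t| <= L * `|s - t|)%R) &
      (forall t : R, (0 < t)%R -> exists z : V,
          min_norm_subgrad ip J (u t) z /\
          (fun h : R => h^-1 *: (u (t + h) - u t))%R @ 0%R^'+ --> (- z)%R)].

Definition Tex (u : R -> V) : \bar R :=
  ereal_inf [set T%:E | T in [set T : R | (0 < T)%R /\
                                forall t, (T <= t)%R -> u t = 0%R]].
End Defs.

From HB Require Import structures.
From mathcomp Require Import all_boot all_order all_algebra.
From mathcomp Require Import all_classical all_reals all_analysis.
From mathcomp Require Import ring lra.
Set Implicit Arguments. Unset Strict Implicit. Unset Printing Implicit Defensive.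
Import Order.TTheory GRing.Theory Num.Theory.
Import numFieldNormedType.Exports.
Local Open Scope classical_set_scope.
Local Open Scope ring_scope.

(* Along the flow, d/dt |u|^2 = -2 <z, u> with z in dJ(u).  Subgradients are
   orthogonal to N(J), so u(t) stays in N(J)^perp, and differentiating
   J(c u) = c^p J(u) at c = 1 gives <z, u> >= p J(u) >= lambda1 |u|^p.  Hence,
   as long as u does not vanish, |u|^(2-p) = (|u|^2)^((2-p)/2) decreases at rate
   at least (2-p) lambda1, and it starts from |f|^(2-p).  Since Brezis solutions
   are only right-differentiable, all monotonicity arguments go through upper
   right Dini derivatives and the extreme value theorem. *)

Section PowR.
Variable R : realType.

Lemma bernoulli_powR (x q : R) : 0 <= x -> 0 <= q <= 1 -> x `^ q <= 1 + q * (x - 1).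
Proof.
move=> x0 /andP[q0 q1].
have [->|q0'] := eqVneq q 0; first by rewrite powRr0 mul0r addr0.
have [->|q1'] := eqVneq q 1; first by rewrite powRr1 // mul1r addrC subrK.
have qp : 0 < q by rewrite lt_neqAle eq_sym q0' q0.
have qlt : 0 < 1 - q by rewrite subr_gt0 lt_neqAle q1' q1.
(* Young's inequality with exponents 1/q and 1/(1-q) *)
have := @conjugate_powR R (x `^ q) 1 q^-1 (1 - q)^-1 (powR_ge0 _ _) ler01.
rewrite !invr_gt0 qp qlt !invrK -powRrM mulfV ?gt_eqF // powRr1 // powR1 mulr1.
rewrite (_ : q + (1 - q) = 1); last by ring.
move=> /(_ isT isT erefl); lra.
Qed.

Lemma powR_le_tangent a b (q : R) : 0 < a -> 0 <= b -> 0 <= q <= 1 ->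
  b `^ q - a `^ q <= q * a `^ (q - 1) * (b - a).
Proof.
move=> a0 b0 hq; have := bernoulli_powR (divr_ge0 b0 (ltW a0)) hq.
rewrite -(ler_pM2l (powR_gt0 q a0)) -powRM ?divr_ge0 ?(ltW a0) // mulrC divfK ?gt_eqF //.
have -> : a `^ (q - 1) = a `^ q / a.
  by rewrite powRB ?powRr1 ?(ltW a0) //; apply/implyP => _; rewrite gt_eqF.
have -> : q * (a `^ q / a) * (b - a) = a `^ q * (1 + q * (b / a - 1)) - a `^ q.
  by field; rewrite gt_eqF.
lra.
Qed.

Lemma powR_diff_quot_cvg (p : R) :
  h^-1 * ((1 + h) `^ p - 1) @[h --> 0^'] --> p.
Proof.
have hd := is_derive1_powR p (@ltr01 R).
have /cvg_ex[l hl] := @ex_derive _ _ _ _ _ _ _ hd.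
have : derive (fun x : R => x `^ p) 1 1 = p * 1 `^ (p - 1) by apply: derive_val.
rewrite /derive (cvg_lim (@norm_hausdorff _ _) hl) powR1 mulr1 => dl.
rewrite -[X in _ --> X]dl; apply: cvg_trans hl; apply: near_eq_cvg; near=> h.
by rewrite /= /shift powR1 [h%:A]mulr1 (addrC h).
Unshelve. all: by end_near. Qed.

End PowR.

Section RightDini.
Variable R : realType.
Implicit Types (g : R -> R) (a b t D : R).

Definition right_dini_le g t D :=
  forall e, 0 < e -> \forall h \near 0^'+, g (t + h) - g t <= (D + e) * h.

Lemma right_dini_le_slope_co g a b D : a <= b -> {within `[a, b], continuous g} ->
  (forall t, a <= t < b -> right_dini_le g t D) -> g b - g a <= D * (b - a).
Proof.
move=> ab gc dg; have [->|neq] := eqVneq a b; first by rewrite !subrr mulr0.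
have ba0 : 0 < b - a by rewrite subr_gt0 lt_neqAle neq ab.
apply/ler_addgt0Pr => e e0; pose k := e / (b - a).
have k0 : 0 < k by rewrite divr_gt0.
(* a minimum of [H] on [a, b] can only sit at [b]: at any c < b the Dini
   estimate makes [H] decrease to the right of c *)
pose H s := g s - (D + k) * s.
have Hc : {within `[a, b], continuous H}.
  apply/subspace_continuousP => x xab; apply: cvgB.
    exact: (subspace_continuousP _ _).1 gc x xab.
  by apply: cvgM; [exact: cvg_cst | exact: cvg_within].
have [c cab Hmin] := EVT_min ab Hc.
have cb : c = b.
  apply/eqP; rewrite eq_le (itvP cab) leNgt; apply/negP => cb.
  have ac : a <= c by rewrite (itvP cab).
  have : \forall h \near 0^'+, [/\ 0 < h, h < b - c & g (c + h) - g c <= (D + k / 2) * h].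
    near=> h; split; near: h; first exact: nbhs_right_gt.
      by apply: nbhs_right_lt; rewrite subr_gt0.
    by apply: dg; [rewrite ac cb | rewrite divr_gt0].
  case/filter_ex => h [h0 hbc gh].
  have := Hmin (c + h); rewrite in_itv /= (le_trans ac (ler_wpDr (ltW h0) (lexx c))).
  rewrite -lerBrDl (ltW hbc) => /(_ isT); rewrite /H.
  have : 0 < k / 2 * h by rewrite mulr_gt0 // divr_gt0.
  move: gh; lra.
have := Hmin a; rewrite in_itv /= lexx ab cb /H => /(_ isT).
have : k * (b - a) = e by rewrite /k divfK // gt_eqF.
lra.
Unshelve. all: by end_near. Qed.

Lemma right_dini_le_slope g a b D : a <= b -> {within `[a, b], continuous g} ->
  (forall t, a < t < b -> right_dini_le g t D) -> g b - g a <= D * (b - a).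
Proof.
move=> ab gc dg; have [->|neq] := eqVneq a b; first by rewrite !subrr mulr0.
have ltab : a < b by rewrite lt_neqAle neq ab.
have [_ ga _] := (continuous_within_itvP _ ltab).1 gc.
rewrite -subr_le0; apply: (@cvgr_to_le _ a^'+ _ _ (fun x => g b - g x - D * (b - x))).
  apply: cvgB; first by apply: cvgB; [exact: cvg_cst | exact: ga].
  by apply: cvgM; [exact: cvg_cst | apply: cvgB; [exact: cvg_cst | exact: cvg_within]].
near=> x; have ax : a < x by near: x; exact: nbhs_right_gt.
have xb : x < b by near: x; exact: nbhs_right_lt.
rewrite subr_le0; apply: right_dini_le_slope_co (ltW xb) _ _.
  apply: continuous_subspaceW gc => y /=; rewrite !in_itv /= => /andP[xy ->].
  by rewrite (le_trans (ltW ax) xy).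
by move=> t /andP[xt tb]; apply: dg; rewrite (lt_le_trans ax xt).
Unshelve. all: by end_near. Qed.

Lemma right_dini_leW g t D D' : D <= D' -> right_dini_le g t D -> right_dini_le g t D'.
Proof.
move=> DD' dg e /dg; apply: filter_app; near=> h => /le_trans; apply.
have h0 : 0 < h by near: h; exact: nbhs_right_gt.
by rewrite ler_pM2r // lerD2r.
Unshelve. all: by end_near. Qed.

Definition right_deriv (V : normedModType R) (u : R -> V) t (v : V) :=
  (fun h => h^-1 *: (u (t + h) - u t)) @ 0^'+ --> v.

Lemma right_deriv_cvg (V : normedModType R) (u : R -> V) t v :
  right_deriv u t v -> u (t + h) @[h --> 0^'+] --> u t.
Proof.
move=> du.
have : u t + h *: (h^-1 *: (u (t + h) - u t)) @[h --> 0^'+] --> u t + 0 *: v.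
  apply: cvgD; first exact: cvg_cst.
  by apply: cvgZ => //; exact: cvg_within.
rewrite scale0r addr0; apply: cvg_trans; apply: near_eq_cvg; near=> h.
have h0 : 0 < h by near: h; exact: nbhs_right_gt.
by rewrite scalerA mulfV ?gt_eqF // scale1r addrC subrK.
Unshelve. all: by end_near. Qed.

Lemma right_dini_le_deriv g t L D : right_deriv g t L -> L <= D -> right_dini_le g t D.
Proof.
move=> /cvgr_lt gL LD e e0; have := gL (D + e); rewrite ltr_pwDr ?(le_lt_trans LD) //.
move=> /(_ isT); apply: filter_app; near=> h => /ltW.
have h0 : 0 < h by near: h; exact: nbhs_right_gt.
by rewrite -ler_pdivlMl ?invr_gt0 // invrK mulrC.
Unshelve. all: by end_near. Qed.

Lemma right_dini_le_powR g t D (q : R) : (forall s, 0 <= g s) -> 0 < g t -> 0 <= q <= 1 ->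
  right_dini_le g t D -> right_dini_le (fun s => g s `^ q) t (q * g t `^ (q - 1) * D).
Proof.
move=> g0 gt0 hq dg e e0; set K := q * g t `^ (q - 1).
have K0 : 0 <= K by rewrite mulr_ge0 ?powR_ge0 //; case/andP: hq.
have /dg : 0 < e / (K + 1) by rewrite divr_gt0 // ltr_wpDl.
apply: filter_app; near=> h => gh.
have h0 : 0 < h by near: h; exact: nbhs_right_gt.
apply: le_trans (powR_le_tangent gt0 (g0 _) hq) _; rewrite -/K.
apply: le_trans (ler_wpM2l K0 gh) _.
rewrite mulrA ler_pM2r // mulrDr lerD2l mulrA ler_pdivrMr ?ltr_wpDl //.
by rewrite mulrC ler_pM2l // lerDl.
Unshelve. all: by end_near. Qed.

End RightDini.

Section InnerProduct.
Variables (R : realType) (V : normedModType R) (ip : V -> V -> R).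
Hypothesis hip : is_inner_product ip.

Lemma ipC x y : ip x y = ip y x. Proof. by case: hip. Qed.
Lemma ipDl x y z : ip (x + y) z = ip x z + ip y z. Proof. by case: hip. Qed.
Lemma ipZl a x y : ip (a *: x) y = a * ip x y. Proof. by case: hip. Qed.
Lemma ipxx x : ip x x = `|x| ^+ 2. Proof. by case: hip. Qed.

Lemma ipDr x y z : ip x (y + z) = ip x y + ip x z.
Proof. by rewrite ipC ipDl ipC (ipC z). Qed.

Lemma ipZr a x y : ip x (a *: y) = a * ip x y.
Proof. by rewrite ipC ipZl ipC. Qed.

Lemma ipNl x y : ip (- x) y = - ip x y.
Proof. by rewrite -scaleN1r ipZl mulN1r. Qed.

Lemma ipNr x y : ip x (- y) = - ip x y.
Proof. by rewrite ipC ipNl ipC. Qed.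

Lemma ipBl x y z : ip (x - y) z = ip x z - ip y z.
Proof. by rewrite ipDl ipNl. Qed.

Lemma ip_polar x y : ip x y = (`|x + y| ^+ 2 - `|x| ^+ 2 - `|y| ^+ 2) / 2.
Proof. by rewrite -!ipxx ipDl !ipDr (ipC y x); field. Qed.

Lemma cvg_ip T (F : set_system T) {FF : Filter F} (X Y : T -> V) x y :
  X @ F --> x -> Y @ F --> y -> ip (X t) (Y t) @[t --> F] --> ip x y.
Proof.
move=> cX cY; under eq_fun do rewrite ip_polar !expr2; rewrite ip_polar !expr2.
have cXY : X t + Y t @[t --> F] --> x + y by apply: cvgD.
by apply: cvgM; [apply: cvgB; [apply: cvgB|]; apply: cvgM; apply: cvg_norm|exact: cvg_cst].
Qed.

Lemma within_continuous_ip (T : topologicalType) (A : set T) (X Y : T -> V) :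
  {within A, continuous X} -> {within A, continuous Y} ->
  {within A, continuous (fun s => ip (X s) (Y s))}.
Proof. by move=> cX cY x; apply: cvg_ip; [exact: cX | exact: cY]. Qed.

Lemma right_deriv_ipl (u : R -> V) t v w :
  right_deriv u t v -> right_deriv (fun s => ip (u s) w) t (ip v w).
Proof.
move=> du; rewrite /right_deriv.
have E h : h^-1 *: (ip (u (t + h)) w - ip (u t) w) = ip (h^-1 *: (u (t + h) - u t)) w.
  by rewrite ipZl ipBl.
under eq_fun do rewrite E.
by apply: cvg_ip => //; exact: cvg_cst.
Qed.

Lemma right_deriv_ipxx (u : R -> V) t v :
  right_deriv u t v -> right_deriv (fun s => ip (u s) (u s)) t (2 * ip v (u t)).
Proof.
move=> du; rewrite /right_deriv.
have -> : 2 * ip v (u t) = ip v (u t + u t) by rewrite ipDr; ring.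
have E h : h^-1 *: (ip (u (t + h)) (u (t + h)) - ip (u t) (u t)) =
    ip (h^-1 *: (u (t + h) - u t)) (u (t + h) + u t).
  by rewrite ipZl ipBl !ipDr (ipC (u t) (u (t + h))); congr (_ * _); ring.
under eq_fun do rewrite E.
apply: cvg_ip => //; apply: cvgD; [exact: right_deriv_cvg du | exact: cvg_cst].
Qed.
End InnerProduct.

Lemma lambda1_le_quotient (R : realType) (V : normedModType R) (ip : V -> V -> R)
    (p : R) (J : V -> \bar R) x :
  H0 ip J x -> (lambda1 ip p J <= p%:E * J x * ((`|x| `^ p)^-1)%:E)%E.
Proof. by move=> Hx; apply: ereal_inf_lbound; exists x. Qed.

Section ConvexHomogeneous.
Variables (R : realType) (V : normedModType R) (ip : V -> V -> R).
Variables (p : R) (J : V -> \bar R).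
Hypotheses (hip : is_inner_product ip) (hconv : convex_fun J).
Hypotheses (hprop : proper_fun J) (hhom : abs_homogeneous p J).

Lemma J0 : J 0 = 0%E. Proof. by case: hhom. Qed.

Lemma JZ c x : c != 0 -> J (c *: x) = ((`|c| `^ p)%:E * J x)%E.
Proof. by case: hhom => + _; apply. Qed.

Lemma JN x : J (- x) = J x.
Proof. by rewrite -scaleN1r JZ ?oppr_eq0 ?oner_eq0 // normrN1 powR1 mul1e. Qed.

Lemma J_ge0 x : (0 <= J x)%E.
Proof.
have t_half : 0 <= (2^-1 : R) <= 1 by rewrite invr_ge0 ler0n invf_le1 ?ler1n.
have := hconv x (- x) t_half.
rewrite scalerN -scalerBl (_ : 2^-1 - (1 - 2^-1) = 0 :> R); last by field.
rewrite scale0r J0 JN.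
case: hprop => /(_ x) + _; case: (J x) => [r| |] //= _.
rewrite -!EFinM -EFinD !lee_fin; lra.
Qed.

Lemma subdiff_fin x z : subdiff ip J x z -> exists r, J x = r%:E.
Proof.
move=> hz; case: hprop => /(_ x) + [y Jy]; have := hz y.
case: (J x) => [r| |] //; first by exists r.
by rewrite addye // => /(le_lt_trans)/(_ Jy); rewrite ltxx.
Qed.

(* J(x + s n) <= (J(2x) + J(2 s n)) / 2 = 2^(p-1) J(x): the affine map
   s |-> r + s <z, n> is bounded above, hence constant. *)
Lemma subdiff_orth x z n : subdiff ip J x z -> nullJ J n -> ip z n = 0.
Proof.
move=> hz hn; have [r Jx] := subdiff_fin hz.
have t_half : 0 <= (2^-1 : R) <= 1 by rewrite invr_ge0 ler0n invf_le1 ?ler1n.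
have bound s : r + s * ip z n <= 2 `^ p * r / 2.
  have := hconv (2 *: x) ((2 * s) *: n) t_half.
  rewrite !scalerA mulVf ?pnatr_eq0 // scale1r (_ : (1 - 2^-1) * (2 * s) = s :> R); last by field.
  have Jsn : J ((2 * s) *: n) = 0%E.
    have [->|s0] := eqVneq (2 * s) 0; first by rewrite scale0r J0.
    by rewrite JZ // hn mule0.
  rewrite Jsn mule0 adde0 JZ ?pnatr_eq0 // ger0_norm ?ler0n // Jx => hJ.
  have := le_trans (hz (x + s *: n)) hJ.
  by rewrite Jx [x + _]addrC addrK (ipZr hip) -EFinD -!EFinM lee_fin [X in _ <= X]mulrC.
apply/eqP; apply: contraT => nz.
have := bound ((2 `^ p * r / 2 - r + 1) / ip z n).
rewrite divfK //; lra.
Qed.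

(* Euler's identity: differentiating J(c x) = c^p J(x) at c = 1^- *)
Lemma subdiff_euler x z r : subdiff ip J x z -> J x = r%:E -> p * r <= ip z x.
Proof.
move=> hz Jx.
have quot_le h : -1 < h < 0 -> h^-1 * ((1 + h) `^ p - 1) * r <= ip z x.
  case/andP => h1 h0; have c0 : 0 < 1 + h by rewrite -ltrBlDl sub0r.
  have := hz ((1 + h) *: x).
  rewrite JZ ?gt_eqF // Jx ger0_norm ?(ltW c0) // scalerDl scale1r [x + _]addrC addrK (ipZr hip).
  rewrite -EFinD -EFinM lee_fin => H.
  by rewrite -mulrA ler_ndivrMl //; lra.
apply: (@cvgr_to_le _ 0^'- _ _ (fun h => h^-1 * ((1 + h) `^ p - 1) * r)).
  by apply: cvgM; [apply: cvg_dnbhs_at_left; exact: powR_diff_quot_cvg | exact: cvg_cst].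
near=> h; apply: quot_le; apply/andP; split.
  by near: h; apply: nbhs_left_gt; rewrite ltrN10.
by near: h; exact: nbhs_left_lt.
Unshelve. all: by end_near. Qed.

Lemma subdiff_ip_ge0 x z : 0 <= p -> subdiff ip J x z -> 0 <= ip z x.
Proof.
move=> p0 hz; have [r Jx] := subdiff_fin hz.
apply: le_trans (subdiff_euler hz Jx); rewrite mulr_ge0 // -lee_fin -Jx.
exact: J_ge0.
Qed.

Lemma lambda1_le x z l : lambda1 ip p J = l%:E -> H0 ip J x -> subdiff ip J x z ->
  l * `|x| `^ p <= ip z x.
Proof.
move=> hl Hx hz; have [r Jx] := subdiff_fin hz.
have xp : 0 < `|x| `^ p by rewrite powR_gt0 // normr_gt0; case: Hx => _ /eqP.
have := lambda1_le_quotient p Hx; rewrite hl Jx -!EFinM lee_fin => hlr.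
by apply: le_trans (subdiff_euler hz Jx); rewrite -ler_pdivlMr.
Qed.
End ConvexHomogeneous.

Section GradientFlow.
Variables (R : realType) (V : normedModType R) (ip : V -> V -> R).
Variables (p : R) (J : V -> \bar R) (f : V) (u : R -> V).
Hypotheses (hip : is_inner_product ip) (hconv : convex_fun J).
Hypotheses (hprop : proper_fun J) (hhom : abs_homogeneous p J).
Hypotheses (hf : H0 ip J f) (hu : brezis_flow ip J f u).

Lemma flow_subgrad t : 0 < t -> exists2 z, subdiff ip J (u t) z & right_deriv u t (- z).
Proof. by case: hu => _ _ _ /[apply] -[z [[hz _] du]]; exists z. Qed.

Lemma flow_within_continuous a b : 0 <= a -> {within `[a, b], continuous u}.
Proof.
case: hu => _ cu _ _ a0; apply: continuous_subspaceW cu => x /=.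
by rewrite !in_itv /= andbT => /andP[/(le_trans a0)].
Qed.

Lemma flow_orth t : 0 <= t -> orth ip (nullJ J) (u t).
Proof.
move=> t0; suff le0 n : nullJ J n -> ip (u t) n <= 0.
  move=> n hn; apply/eqP; rewrite eq_le le0 //= -oppr_le0 -(ipNr hip) le0 //.
  by rewrite /nullJ /= (JN hhom).
move=> hn; have f0 : ip (u 0) n = 0 by have [-> _ _ _] := hu; case: hf => + _; apply.
have cn : {within `[0, t], continuous (fun s => ip (u s) n)}.
  apply: within_continuous_ip => //; first exact: flow_within_continuous.
  by apply: continuous_subspaceT => ?; exact: cvg_cst.
have dn s : 0 < s < t -> right_dini_le (fun s => ip (u s) n) s 0.
  case/andP => /flow_subgrad[z hz du] _.
  apply: right_dini_le_deriv (right_deriv_ipl hip (w := n) du) _.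
  by rewrite (ipNl hip) (subdiff_orth hip hconv hprop hhom hz hn) oppr0.
by have := right_dini_le_slope t0 cn dn; rewrite f0 subr0 mul0r.
Qed.

Lemma flow_H0 t : 0 <= t -> u t != 0 -> H0 ip J (u t).
Proof. by move=> t0 /eqP ut; split; [exact: flow_orth | exact: ut]. Qed.

Lemma flow_norm_nonincreasing s t : 0 <= p -> 0 <= s -> s <= t -> `|u t| <= `|u s|.
Proof.
move=> p0 s0 st.
have cu := flow_within_continuous (b := t) s0.
have dphi r : s < r < t -> right_dini_le (fun r => ip (u r) (u r)) r 0.
  case/andP => sr _; have [z hz du] := flow_subgrad (le_lt_trans s0 sr).
  apply: right_dini_le_deriv (right_deriv_ipxx hip du) _.
  by rewrite (ipNl hip) mulrN oppr_le0 mulr_ge0 // (subdiff_ip_ge0 hip hconv hprop hhom p0 hz).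
have := right_dini_le_slope st (within_continuous_ip hip cu cu) dphi.
by rewrite mul0r subr_le0 !(ipxx hip) ler_sqr ?nnegrE.
Qed.

Lemma flow_nonzero : exists2 t, 0 < t & u t != 0.
Proof.
have [_ c0 _] := (continuous_within_itvP _ ltr01).1 (flow_within_continuous (b := 1) (lexx 0)).
have u0 : u 0 != 0 by have [-> _ _ _] := hu; case: hf => _ /eqP.
have : \forall t \near 0^'+, 0 < t /\ u t != 0.
  by near=> t; split; near: t; [exact: nbhs_right_gt | exact: cvgr_neq0 c0 u0].
by case/filter_ex => t [t0 ut]; exists t.
Unshelve. all: by end_near. Qed.

Lemma lambda1_fin_num : (0 < lambda1 ip p J)%E -> exists2 l, lambda1 ip p J = l%:E & 0 < l.
Proof.
move=> hl; have [t t0 ut] := flow_nonzero; have [z hz _] := flow_subgrad t0.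
have [r Jr] := subdiff_fin hprop hz.
move: hl (lambda1_le_quotient p (flow_H0 (ltW t0) ut)); rewrite Jr -!EFinM.
by case: (lambda1 ip p J) => [l l0 _||//]; [exists l; rewrite -?lte_fin | rewrite leye_eq].
Qed.

Lemma flow_right_dini_decay l s : 0 <= p <= 2 -> lambda1 ip p J = l%:E ->
  0 < s -> u s != 0 ->
  right_dini_le (fun r => ip (u r) (u r) `^ ((2 - p) / 2)) s (- ((2 - p) * l)).
Proof.
case/andP => p0 p2 hl s0 us; set q := (2 - p) / 2.
have hq : 0 <= q <= 1 by apply/andP; split; rewrite /q; lra.
have [z hz du] := flow_subgrad s0.
have hb := lambda1_le hip hprop hhom hl (flow_H0 (ltW s0) us) hz.
have Ns : 0 < `|u s| by rewrite normr_gt0.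
have phi0 r : 0 <= ip (u r) (u r) by rewrite (ipxx hip) sqr_ge0.
have phis : 0 < ip (u s) (u s) by rewrite (ipxx hip) exprn_gt0.
have dphi := right_dini_le_deriv (right_deriv_ipxx hip du) (lexx _).
apply: right_dini_leW (right_dini_le_powR phi0 phis hq dphi).
(* (|u s|^2)^(q-1) = |u s|^-p and <z, u s> >= l |u s|^p *)
rewrite (ipxx hip) -powR_mulrn // -powRrM (_ : 2%:R * (q - 1) = - p); last first.
  by rewrite /q; field.
have Np : 0 < `|u s| `^ p by rewrite powR_gt0.
rewrite powRN (ipNl hip) (_ : q * _ * _ = - ((2 - p) * ip z (u s) / `|u s| `^ p)).
  by rewrite lerN2 ler_pdivlMr // -mulrA ler_wpM2l // subr_ge0.
by rewrite /q; field; rewrite gt_eqF.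
Qed.

Lemma flow_decay l T : 0 <= p <= 2 -> lambda1 ip p J = l%:E -> 0 <= T -> u T != 0 ->
  `|u T| `^ (2 - p) <= `|f| `^ (2 - p) - (2 - p) * l * T.
Proof.
move=> hp hl T0 uT; have [p0 _] := andP hp.
have pos s : 0 <= s <= T -> 0 < `|u s|.
  case/andP => s0 sT; apply: lt_le_trans (flow_norm_nonincreasing p0 s0 sT).
  by rewrite normr_gt0.
pose phi s := ip (u s) (u s); set q := (2 - p) / 2.
have phiE s : phi s = `|u s| ^+ 2 by exact: ipxx.
have psiE s : phi s `^ q = `|u s| `^ (2 - p).
  by rewrite phiE -powR_mulrn // -powRrM /q; congr (_ `^ _); field.
have cphi : {within `[0, T], continuous phi}.
  by have cu := flow_within_continuous (b := T) (lexx 0); exact: within_continuous_ip.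
have cpsi : {within `[0, T], continuous (fun s => phi s `^ q)}.
  apply/subspace_continuousP => s sT.
  apply: (@continuous_cvg _ _ _ _ _ phi (fun y => y `^ q)).
    apply: differentiable_continuous; rewrite -derivable1_diffP.
    by apply: derivable_powR; rewrite in_itv /= andbT phiE exprn_gt0 // pos.
  exact: (subspace_continuousP _ _).1 cphi s sT.
have dpsi s : 0 < s < T -> right_dini_le (fun s => phi s `^ q) s (- ((2 - p) * l)).
  case/andP => s0 sT; apply: flow_right_dini_decay => //.
  by rewrite -normr_gt0 pos // (ltW s0) ltW.
have := right_dini_le_slope T0 cpsi dpsi.
rewrite !psiE subr0 mulNr; have [-> _ _ _] := hu; lra.
Qed.

Lemma flow_extinction l : 0 <= p < 2 -> lambda1 ip p J = l%:E -> 0 < l ->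
  forall t, `|f| `^ (2 - p) / ((2 - p) * l) <= t -> u t = 0.
Proof.
case/andP => p0 p2 hl l0; set T := _ / _.
have cl0 : 0 < (2 - p) * l by rewrite mulr_gt0 // subr_gt0.
have T0 : 0 <= T by rewrite divr_ge0 ?powR_ge0 ?ltW.
suff uT : u T = 0.
  move=> t Tt; apply/eqP; rewrite -normr_le0 -(normr0 V) -uT.
  exact: flow_norm_nonincreasing.
apply/eqP; apply: contraT => uT.
have p02 : 0 <= p <= 2 by rewrite p0 ltW.
have := flow_decay p02 hl T0 uT.
have -> : (2 - p) * l * T = `|f| `^ (2 - p) by rewrite mulrC divfK ?gt_eqF.
by rewrite subrr leNgt powR_gt0 ?normr_gt0.
Qed.
End GradientFlow.

Theorem theorem2 (R : realType) (V : completeNormedModType R)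
    (ip : V -> V -> R) (p : R) (J : V -> \bar R) (f : V) (u : R -> V) :
  is_inner_product ip ->
  1 <= p < 2 ->
  convex_fun J ->
  lower_semicontinuous J ->
  proper_fun J ->
  closure (dom J) = setT ->
  abs_homogeneous p J ->
  (0 < lambda1 ip p J)%E ->
  H0 ip J f ->
  brezis_flow ip J f u ->
  (Tex u <= (`|f| `^ (2 - p))%:E / ((2 - p)%:E * lambda1 ip p J))%E /\
  (Tex u < +oo)%E.
Proof.
move=> hip /andP[p1 p2] hconv _ hprop _ hhom hl hf hu.
have hp : 0 <= p < 2 by rewrite p2 (le_trans ler01 p1).
have [l hl1 l0] := lambda1_fin_num hip hconv hprop hhom hf hu hl.
set T := `|f| `^ (2 - p) / ((2 - p) * l).
have T0 : 0 < T by rewrite divr_gt0 ?powR_gt0 ?normr_gt0 ?mulr_gt0 ?subr_gt0 //; case: hf => _ /eqP.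
have TexT : (Tex u <= T%:E)%E.
  apply: ereal_inf_lbound; exists T => //; split => // t.
  exact: (flow_extinction hip hconv hprop hhom hf hu hp hl1 l0).
split; last exact: le_lt_trans TexT (ltey _).
by rewrite hl1 -EFinM inver gt_eqF ?mulr_gt0 ?subr_gt0.
Qed.
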